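(* A uniform preorder $(A,R)$ is cartesian if and only if there exist a function $\wedge:A\times A\to A$ and an element $\top\in A$ such that the relations $$\tau=\{(a,\top)\mid a\in A\},\quad \lambda=\{(a\wedge b,a)\mid a,b\in A\},\quad \rho=\{(a\wedge b,b)\mid a,b\in A\}$$ are in $R$, and for all $r,s\in R$ the relation $\langle\!\langle r,s\rangle\!\rangle=\{(a,b\wedge c)\mid (a,b)\in r,(a,c)\in s\}$ is in $R$.
   Context: A uniform preorder is a pair $(A,R)$ with $A$ a set and $R\subseteq P(A\times A)$ such that $\mathrm{id}_A\in R$, $s\circ r\in R$ whenever $r,s\in R$, and $s\in R$ whenever $r\in R$ and $s\subseteq r$. A monotone map $f:(A,R)\to(B,S)$ is a function $f:A\to B$ with $\{(fa,fa')\mid (a,a')\in r\}\in S$ for all $r\in R$; for monotone $f,g$, $f\le g$ iff $\{(fa,ga)\mid a\in A\}\in S$. These form a locally ordered category $\mathsf{UOrd}$, in which an adjunction $f\dashv g$ ($f:X\to Y$, $g:Y\to X$) means $\mathrm{id}_X\le g\circ f$ and $f\circ g\le\mathrm{id}_Y$. $\mathsf{UOrd}$ has finite 2-products: the terminal object is a singleton set with its unique uniform preorder structure, and the product of $(A,R)$ and $(B,S)$ is $(A\times B,R\otimes S)$ where $R\otimes S$ consists of all relations contained in some $r\times s=\{((a,b),(a',b'))\mid (a,a')\in r,(b,b')\in s\}$ with $r\in R,s\in S$. A uniform preorder $(A,R)$ is cartesian if the terminal projection $(A,R)\to 1$ and the diagonal $(A,R)\to(A,R)\times(A,R)$ have right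 adjoints in $\mathsf{UOrd}$. *)

Definition relation (A : Type) := A -> A -> Prop.

Definition uniform_preorder (A : Type) (R : relation A -> Prop) : Prop :=
  R (fun a a' => a = a') /\
  (forall r s, R r -> R s -> R (fun a a'' => exists a', r a a' /\ s a' a'')) /\
  (forall r s, R r -> (forall a a', s a a' -> r a a') -> R s).

Definition rel_image {A B : Type} (f : A -> B) (r : relation A) : relation B :=
  fun b b' => exists a a', r a a' /\ b = f a /\ b' = f a'.

Definition monotone {A B : Type} (R : relation A -> Prop) (S : relation B -> Prop)
  (f : A -> B) : Prop :=
  forall r, R r -> S (rel_image f r).

Definition mle {A B : Type} (S : relation B -> Prop) (f g : A -> B) : Prop :=
  S (fun b b' => exists a, b = f a /\ b' = g a).

Definition has_right_adjoint {A B : Type} (R : relation A -> Prop)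
  (S : relation B -> Prop) (f : A -> B) : Prop :=
  exists g : B -> A, monotone S R g /\
    mle R (fun a => a) (fun a => g (f a)) /\
    mle S (fun b => f (g b)) (fun b => b).

(* terminal object: the singleton with its unique uniform preorder structure
   (every relation on a singleton is contained in the identity). *)
Definition terminal_rel : relation unit -> Prop := fun _ => True.

Definition prod_rel {A B : Type} (R : relation A -> Prop) (S : relation B -> Prop)
  : relation (A * B) -> Prop :=
  fun t => exists r s, R r /\ S s /\
    (forall p q, t p q -> r (fst p) (fst q) /\ s (snd p) (snd q)).

Definition cartesian (A : Type) (R : relation A -> Prop) : Prop :=
  has_right_adjoint R terminal_rel (fun _ : A => tt) /\
  has_right_adjoint R (prod_rel R R) (fun a : A => (a, a)).

(* A right adjoint [g] of the diagonal is a binary meet: the counit [(g p, g p) <= p]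
   says exactly that [g] lies below both projections, and composing the unit
   [a <= g (a, a)] with the image under [g] of a product relation [r x s] yields
   the pairing [<<r, s>>].  Conversely, a meet with these properties is monotone
   on products because the image under the meet of a subrelation of [r x s] is
   contained in [<<lambda; r, rho; s>>].  The terminal projection is handled the
   same way with a top element. *)

From Stdlib Require Import Setoid.

Definition top_rel {A : Type} (top : A) : relation A :=
  fun x y => exists a, x = a /\ y = top.

Definition meet_fst_rel {A : Type} (meet : A * A -> A) : relation A :=
  fun x y => exists a b, x = meet (a, b) /\ y = a.

Definition meet_snd_rel {A : Type} (meet : A * A -> A) : relation A :=
  fun x y => exists a b, x = meet (a, b) /\ y = b.

Definition meet_pair_rel {A : Type} (meet : A * A -> A) (r s : relation A) : relation A :=
  fun x y => exists a b c, r a b /\ s a c /\ x = a /\ y = meet (b, c).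

Definition rel_comp {A : Type} (r s : relation A) : relation A :=
  fun a a'' => exists a', r a a' /\ s a' a''.

Section CartesianUniformPreorder.

Variables (A : Type) (R : relation A -> Prop).

Hypothesis R_id : R (fun a a' => a = a').
Hypothesis R_comp : forall r s, R r -> R s -> R (rel_comp r s).
Hypothesis R_sub : forall r s, R r -> (forall a a', s a a' -> r a a') -> R s.

Lemma const_monotone {B : Type} (S : relation B -> Prop) (c : A) :
  monotone S R (fun _ => c).
Proof.
  intros r _. apply (R_sub _ _ R_id).
  intros x y [b [b' [_ [-> ->]]]]. reflexivity.
Qed.

Lemma terminal_right_adjoint_iff :
  has_right_adjoint R terminal_rel (fun _ : A => tt) <-> exists top, R (top_rel top).
Proof.
  split.
  - intros [g [_ [Hunit _]]]. exists (g tt).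
    apply (R_sub _ _ Hunit). intros x y [a [-> ->]]. exists a. auto.
  - intros [top Htop]. exists (fun _ => top). split; [|split].
    + apply const_monotone.
    + apply (R_sub _ _ Htop). intros x y [a [-> ->]]. exists a. auto.
    + exact I.
Qed.

Lemma diag_counit_iff (meet : A * A -> A) :
  mle (prod_rel R R) (fun p => (meet p, meet p)) (fun p => p) <->
  R (meet_fst_rel meet) /\ R (meet_snd_rel meet).
Proof.
  split.
  - intros [r [s [Hr [Hs Hrs]]]].
    assert (Hcounit : forall a b, r (meet (a, b)) a /\ s (meet (a, b)) b)
      by (intros a b; exact (Hrs _ (a, b) (ex_intro _ (a, b) (conj eq_refl eq_refl)))).
    split.
    + apply (R_sub _ _ Hr). intros x y [a [b [-> ->]]]. apply Hcounit.
    + apply (R_sub _ _ Hs). intros x y [a [b [-> ->]]]. apply Hcounit.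
  - intros [Hfst Hsnd]. exists (meet_fst_rel meet), (meet_snd_rel meet).
    split; [exact Hfst|split; [exact Hsnd|]].
    intros p q [[a b] [-> ->]]. split; exists a, b; auto.
Qed.

Lemma meet_pair_closed_of_unit (meet : A * A -> A) :
  monotone (prod_rel R R) R meet ->
  mle R (fun a => a) (fun a => meet (a, a)) ->
  forall r s, R r -> R s -> R (meet_pair_rel meet r s).
Proof.
  intros Hmon Hunit r s Hr Hs.
  pose (t := fun p q : A * A =>
               exists a b c, r a b /\ s a c /\ p = (a, a) /\ q = (b, c)).
  assert (Ht : prod_rel R R t).
  { exists r, s. split; [exact Hr|split; [exact Hs|]].
    intros p q [a [b [c [Hab [Hac [-> ->]]]]]]. auto. }
  apply (R_sub _ _ (R_comp _ _ Hunit (Hmon t Ht))).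
  intros x y [a [b [c [Hab [Hac [-> ->]]]]]].
  exists (meet (a, a)). split.
  - exists a. auto.
  - exists (a, a), (b, c). split; [exists a, b, c|]; auto.
Qed.

Lemma diag_unit_of_meet_pair_closed (meet : A * A -> A) :
  (forall r s, R r -> R s -> R (meet_pair_rel meet r s)) ->
  mle R (fun a => a) (fun a => meet (a, a)).
Proof.
  intros Hpair. apply (R_sub _ _ (Hpair _ _ R_id R_id)).
  intros x y [a [-> ->]]. exists a, a, a. auto.
Qed.

Lemma meet_monotone (meet : A * A -> A) :
  R (meet_fst_rel meet) -> R (meet_snd_rel meet) ->
  (forall r s, R r -> R s -> R (meet_pair_rel meet r s)) ->
  monotone (prod_rel R R) R meet.
Proof.
  intros Hfst Hsnd Hpair t [r [s [Hr [Hs Hrs]]]].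
  apply (R_sub _ _ (Hpair _ _ (R_comp _ _ Hfst Hr) (R_comp _ _ Hsnd Hs))).
  intros x y [[p1 p2] [[q1 q2] [Hpq [-> ->]]]].
  destruct (Hrs _ _ Hpq) as [H1 H2]. simpl in H1, H2.
  exists (meet (p1, p2)), q1, q2. split; [|split; [|split; reflexivity]].
  - exists p1. split; [exists p1, p2|]; auto.
  - exists p2. split; [exists p1, p2|]; auto.
Qed.

Lemma diag_right_adjoint_iff :
  has_right_adjoint R (prod_rel R R) (fun a : A => (a, a)) <->
  exists meet : A * A -> A,
    R (meet_fst_rel meet) /\ R (meet_snd_rel meet) /\
    (forall r s, R r -> R s -> R (meet_pair_rel meet r s)).
Proof.
  split.
  - intros [meet [Hmon [Hunit Hcounit]]]. exists meet.
    destruct (proj1 (diag_counit_iff meet) Hcounit) as [Hfst Hsnd].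
    split; [exact Hfst|split; [exact Hsnd|]].
    exact (meet_pair_closed_of_unit meet Hmon Hunit).
  - intros [meet [Hfst [Hsnd Hpair]]]. exists meet. split; [|split].
    + exact (meet_monotone meet Hfst Hsnd Hpair).
    + exact (diag_unit_of_meet_pair_closed meet Hpair).
    + exact (proj2 (diag_counit_iff meet) (conj Hfst Hsnd)).
Qed.

End CartesianUniformPreorder.

Theorem lemma3p2 (A : Type) (R : relation A -> Prop) (HR : uniform_preorder A R) :
  cartesian A R <->
  exists (meet : A * A -> A) (top : A),
    R (fun x y => exists a, x = a /\ y = top) /\
    R (fun x y => exists a b, x = meet (a, b) /\ y = a) /\
    R (fun x y => exists a b, x = meet (a, b) /\ y = b) /\
    (forall r s, R r -> R s ->
       R (fun x y => exists a b c, r a b /\ s a c /\ x = a /\ y = meet (b, c))).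
Proof.
  destruct HR as [R_id [R_comp R_sub]].
  unfold cartesian.
  rewrite (terminal_right_adjoint_iff A R R_id R_sub),
          (diag_right_adjoint_iff A R R_id R_comp R_sub).
  split.
  - intros [[top Htop] [meet Hmeet]]. exists meet, top. auto.
  - intros [meet [top [Htop Hmeet]]]. split; [exists top | exists meet]; auto.
Qed.
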